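(* Let $M_{\mathcal X}>0$, $M_{\mathcal Y}>0$, $\kappa_t>0$, $\sigma_t>0$ for $t\in\mathcal T$, and $r=\sum_{t\in\mathcal T}\kappa_t/\sigma_t$. Consider the two-player game in which $\mathcal X$ chooses $\boldsymbol X\in\mathbb R^T_{\ge0}$ with $\sum_t\kappa_tX_t=M_{\mathcal X}$ and receives $\pi^*_{\mathrm{WL}}(\boldsymbol X,\boldsymbol Y)$, while $\mathcal Y$ chooses $\boldsymbol Y\in\mathbb R^T_{\ge0}$ with $\sum_t\sigma_tY_t=M_{\mathcal Y}$ and receives $1-\pi^*_{\mathrm{WL}}(\boldsymbol X,\boldsymbol Y)$. Then the equilibrium investment profile is $$X^*_t=\frac{M_{\mathcal X}}{\kappa_t}\cdot\frac{\kappa_t/\sigma_t}{r},\qquad Y^*_t=\frac{M_{\mathcal Y}}{\sigma_t}\cdot\frac{\kappa_t/\sigma_t}{r},\qquad t\in\mathcal T,$$ and the equilibrium payoffs are $\pi^*_{\mathrm{WL}}(\boldsymbol X^*,\boldsymbol Y^* )=L\big(\frac{M_{\mathcal Y}}{M_{\mathcal X}}r\big)$ for $\mathcal X$ and $1-L\big(\frac{M_{\mathcal Y}}{M_{\mathcal X}}r\big)$ for $\mathcal Y$.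
   Context: $\mathcal T=\{1,\dots,T\}$, $T\ge1$. The function $L:[0,\infty]\to[0,1]$ is $L(\alpha)=1-\alpha/2$ if $\alpha\le1$, $L(\alpha)=1/(2\alpha)$ if $1<\alpha<\infty$, $L(\infty)=0$. For $\boldsymbol X,\boldsymbol Y\in\mathbb R^T_{\ge0}$, $\alpha(\boldsymbol X,\boldsymbol Y)=\sum_tY_t/X_t\in[0,\infty]$, where a term with $Y_t=0$ equals $0$ and a term with $X_t=0<Y_t$ equals $+\infty$; $\pi^*_{\mathrm{WL}}(\boldsymbol X,\boldsymbol Y)=L(\alpha(\boldsymbol X,\boldsymbol Y))$. An equilibrium is a feasible pair from which neither player can strictly improve its own payoff by a unilateral feasible deviation. *)

From HB Require Import structures.
From mathcomp Require Import all_boot all_order all_algebra.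
From mathcomp Require Import reals constructive_ereal.
Set Implicit Arguments. Unset Strict Implicit. Unset Printing Implicit Defensive.
Import Order.TTheory GRing.Theory Num.Theory.
Local Open Scope ring_scope.
Local Open Scope ereal_scope.

Section WL.
Variables (R : realType) (T : nat).

Definition ratio_term (x y : R) : \bar R :=
  if y == 0%R then 0 else if x == 0%R then +oo else (y / x)%:E.

Definition alpha (X Y : 'I_T -> R) : \bar R :=
  \sum_(t < T) ratio_term (X t) (Y t).

(* L : [0, +oo] -> [0,1]; the value at -oo is irrelevant (alpha >= 0) *)
Definition Lfun (a : \bar R) : R :=
  match a with
  | EFin r => if (r <= 1)%R then (1 - r / 2)%R else (1 / (2 * r))%R
  | +oo => 0%R
  | -oo => 1%R
  end.

Definition piWL (X Y : 'I_T -> R) : R := Lfun (alpha X Y).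

Definition feasible (c : 'I_T -> R) (M : R) (Z : 'I_T -> R) : Prop :=
  (forall t, (0 <= Z t)%R) /\ (\sum_(t < T) c t * Z t)%R = M.

Definition is_equilibrium (kappa sigma : 'I_T -> R) (MX MY : R)
  (X Y : 'I_T -> R) : Prop :=
  [/\ feasible kappa MX X, feasible sigma MY Y,
      (forall X', feasible kappa MX X' -> (piWL X' Y <= piWL X Y)%R)
    & (forall Y', feasible sigma MY Y' -> (1 - piWL X Y' <= 1 - piWL X Y)%R)].

End WL.

(* Since L is strictly decreasing on [0, +oo], an equilibrium is a saddle point
   of alpha: X minimizes alpha(., Y) and Y maximizes alpha(X, .) over the budget
   sets.  For fixed Y, write Y = lam * kappa * a^2 with a feasible; the tangent
   bounds Y_t / x >= lam * kappa_t * (2 a_t - x) sum to a constant on the budget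
   set, so alpha(., Y) is minimized exactly at a.  For fixed X, alpha(X, .) is
   linear in Y, and comparing Y with the deviations concentrated on a single t
   shows that sigma_t X_t is constant on the support of Y, which is everything
   since a vanishing X_t would let Y reach alpha = +oo.  The two budgets then
   pin down X* and Y*; conversely, against X* every feasible Y gives the same
   alpha = (M_Y / M_X) r. *)

From HB Require Import structures.
From mathcomp Require Import all_boot all_order all_algebra.
From mathcomp Require Import boolp reals constructive_ereal.
From mathcomp Require Import ring lra.
Set Implicit Arguments.
Unset Strict Implicit.
Unset Printing Implicit Defensive.

Import Order.TTheory GRing.Theory Num.Theory.
Local Open Scope ring_scope.

Section Lfun.
Variable R : realType.

Lemma Lfun_gt0 (a : R) : 0 <= a -> 0 < Lfun a%:E.
Proof.
move=> a0 /=; case: ifP => [|/negbT]; first lra.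
by rewrite -ltNge => a1; rewrite div1r invr_gt0; lra.
Qed.

Lemma Lfun_lt_EFin (a b : R) : 0 <= a -> a < b -> Lfun b%:E < Lfun a%:E.
Proof.
move=> a0 ab /=; case: ifP => [|/negbT]; case: ifP => [|/negbT]; rewrite -?ltNge.
1,2: lra.
- move=> a1 b1; have : 1 / (2 * b) < 1 / 2 by rewrite !div1r ltf_pV2 ?posrE; lra.
  lra.
- by move=> a1 b1; rewrite !div1r ltf_pV2 ?posrE; lra.
Qed.

Lemma Lfun_lt (a b : \bar R) : (0 <= a)%E -> (a < b)%E -> Lfun b < Lfun a.
Proof.
case: a => [a| |] //; case: b => [b| |] //.
- by rewrite !lee_fin lte_fin; exact: Lfun_lt_EFin.
- by move=> a0 _; apply: Lfun_gt0; rewrite -lee_fin.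
Qed.

Lemma leLfun (a b : \bar R) : (0 <= a)%E -> (0 <= b)%E ->
  (Lfun a <= Lfun b) = (b <= a)%E.
Proof.
move=> a0 b0; have [ab|ba|->] := ltgtP a b; last by rewrite !lexx.
- by rewrite !lt_geF // Lfun_lt.
- by rewrite !ltW // Lfun_lt.
Qed.

End Lfun.

Section Profiles.
Variables (R : realType) (T : nat).
Implicit Types (c g X Y Z : 'I_T -> R) (M : R).

Lemma feasible_neq0 c M Z : 0 < M -> feasible c M Z -> exists t, Z t != 0.
Proof.
move=> M_gt0 [_ fZ]; apply/existsP; apply: contraTT M_gt0 => /existsPn Z0.
by rewrite -fZ big1 ?ltxx // => t _; rewrite (eqP (negPn (Z0 t))) mulr0.
Qed.

(* Take [a] proportional to [sqrt (Y / c)]. *)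
Lemma sq_profile_exists c Y M : (forall t, 0 < c t) -> 0 < M ->
  (forall t, 0 <= Y t) -> (exists t, Y t != 0) ->
  exists a lam, [/\ feasible c M a, 0 < lam & forall t, Y t = lam * (c t * a t ^+ 2)].
Proof.
move=> c_gt0 M_gt0 Y0 [t0 Yt0].
pose s t := Num.sqrt (Y t / c t); pose S := \sum_(t < T) c t * s t.
have s0 t : 0 <= s t by exact: sqrtr_ge0.
have s2 t : s t ^+ 2 = Y t / c t by rewrite sqr_sqrtr // divr_ge0 // ltW.
have S_gt0 : 0 < S.
  rewrite /S (bigD1 t0) //= ltr_pwDl ?sumr_ge0 // => [|t _]; last by rewrite mulr_ge0 // ltW.
  rewrite mulr_gt0 // lt_def s0 andbT -sqrf_eq0 s2 mulf_eq0 invr_eq0.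
  by rewrite negb_or Yt0 gt_eqF.
exists (fun t => M * s t / S), (S ^+ 2 / M ^+ 2); split.
- split=> [t|]; first by rewrite divr_ge0 ?mulr_ge0 // ltW.
  rewrite (eq_bigr (fun t => M / S * (c t * s t))) => [|t _]; last by ring.
  by rewrite -mulr_sumr -/S mulfVK // gt_eqF.
- by rewrite divr_gt0 // exprn_gt0.
- move=> t; rewrite exprMn exprMn s2.
  by field; rewrite !gt_eqF.
Qed.

Lemma sum_proportional c g Z M (mu : R) :
  (forall t, Z t = mu * g t) -> \sum_(t < T) c t * Z t = M ->
  \sum_(t < T) c t * g t != 0 -> Z = (fun t => M * g t / \sum_(u < T) c u * g u).
Proof.
move=> Zg <- cg0; apply: funext => t.
rewrite (eq_bigr (fun u => mu * (c u * g u))) => [|u _]; last by rewrite Zg mulrCA.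
by rewrite -mulr_sumr Zg mulrAC mulfK.
Qed.

End Profiles.

Section Alpha.
Variables (R : realType) (T : nat).
Implicit Types (X Y : 'I_T -> R).

Lemma ratio_term_ge0 (x y : R) : 0 <= x -> 0 <= y -> (0 <= ratio_term x y)%E.
Proof.
move=> x0 y0; rewrite /ratio_term; case: eqP => // _; case: eqP => _.
  exact: leey.
by rewrite lee_fin divr_ge0.
Qed.

Lemma alpha_ge0 X Y : (forall t, 0 <= X t) -> (forall t, 0 <= Y t) ->
  (0 <= alpha X Y)%E.
Proof. by move=> X0 Y0; apply: sume_ge0 => t _; exact: ratio_term_ge0. Qed.

Lemma alpha_pinfty X Y t : (forall u, 0 <= X u) -> (forall u, 0 <= Y u) ->
  X t = 0 -> Y t != 0 -> alpha X Y = +oo%E.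
Proof.
move=> X0 Y0 Xt Yt; rewrite /alpha (bigD1 t) //= /ratio_term (negbTE Yt) Xt eqxx.
have : (0 <= \sum_(u < T | u != t) ratio_term (X u) (Y u))%E.
  by apply: sume_ge0 => u _; exact: ratio_term_ge0.
by case: (\sum_(u < T | u != t) _).
Qed.

Lemma alpha_EFin X Y : (forall t, Y t != 0 -> X t != 0) ->
  alpha X Y = (\sum_(t < T) Y t / X t)%:E.
Proof.
move=> XY; rewrite /alpha -sumEFin; apply: eq_bigr => t _; rewrite /ratio_term.
by case: eqP => [->|/eqP Yt]; [rewrite mul0r | rewrite (negbTE (XY t Yt))].
Qed.

Lemma alpha_lt_pinfty_neq0 X Y : (forall t, 0 <= X t) -> (forall t, 0 <= Y t) ->
  (alpha X Y < +oo)%E -> forall t, Y t != 0 -> X t != 0.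
Proof.
move=> X0 Y0 + t Yt; apply: contraTneq => Xt.
by rewrite (alpha_pinfty X0 Y0 Xt Yt) ltxx.
Qed.

Lemma alpha_sigma_const (sigma X Y : 'I_T -> R) (M K : R) :
  K != 0 -> (forall t, sigma t * X t = K) -> \sum_(t < T) sigma t * Y t = M ->
  alpha X Y = (M / K)%:E.
Proof.
move=> K0 sX fY.
have [sigma0 X0] : (forall t, sigma t != 0) /\ (forall t, X t != 0).
  by split=> t; apply: contra_neq K0 => e; rewrite -(sX t) e ?mul0r ?mulr0.
rewrite (alpha_EFin (fun t _ => X0 t)) -fY mulr_suml.
by congr EFin; apply: eq_bigr => t _; rewrite -(sX t); field; rewrite sigma0 X0.
Qed.

End Alpha.

Section Equilibrium.
Variables (R : realType) (T : nat).
Variables (kappa sigma : 'I_T -> R) (MX MY : R).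

Lemma equilibriumE (X Y : 'I_T -> R) :
  is_equilibrium kappa sigma MX MY X Y <->
  [/\ feasible kappa MX X, feasible sigma MY Y,
      (forall X', feasible kappa MX X' -> alpha X Y <= alpha X' Y)%E
    & (forall Y', feasible sigma MY Y' -> alpha X Y' <= alpha X Y)%E].
Proof.
have a0 X' Y' : feasible kappa MX X' -> feasible sigma MY Y' -> (0 <= alpha X' Y')%E.
  by move=> [X'0 _] [Y'0 _]; exact: alpha_ge0.
split=> -[fX fY Xopt Yopt]; split=> // [X' fX'|Y' fY'].
- by rewrite -leLfun ?a0 //; exact: Xopt.
- by move: (Yopt _ fY'); rewrite lerD2l lerN2 /piWL leLfun ?a0.
- by rewrite /piWL leLfun ?a0 //; exact: Xopt.
- by rewrite lerD2l lerN2 /piWL leLfun ?a0 //; exact: Yopt.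
Qed.

End Equilibrium.

Section SquareProfile.
Variables (R : realType) (T : nat).
Variables (c a Y : 'I_T -> R) (M lam : R).
Hypotheses (c_gt0 : forall t, 0 < c t) (fa : feasible c M a) (lam_ge0 : 0 <= lam).
Hypothesis Y_sq : forall t, Y t = lam * (c t * a t ^+ 2).

Let Y_ge0 t : 0 <= Y t.
Proof. by rewrite Y_sq mulr_ge0 // mulr_ge0 ?sqr_ge0 // ltW. Qed.

Lemma alpha_sq_profile : alpha a Y = (lam * M)%:E.
Proof.
have Ya t : Y t / a t = lam * (c t * a t).
  rewrite Y_sq; have [->|at0] := eqVneq (a t) 0; last by field.
  by rewrite expr0n /= !mulr0 mul0r.
rewrite alpha_EFin => [|t]; last by apply: contraNneq => at0; rewrite Y_sq at0 expr0n /= !mulr0.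
by rewrite (eq_bigr _ (fun t _ => Ya t)) -mulr_sumr fa.2.
Qed.

(* [gap X t] is the height of [x |-> Y t / x] at [X t] above its tangent at
   [a t]; that tangent has slope [- lam * c t], so the tangent values sum to
   [lam * M] all over the budget set. *)
Let gap (X : 'I_T -> R) t := Y t / X t - lam * (c t * (2 * a t - X t)).

Let sum_gap X : feasible c M X ->
  \sum_(t < T) gap X t = \sum_(t < T) Y t / X t - lam * M.
Proof.
move=> [_ fX]; rewrite sumrB -mulr_sumr.
have -> : \sum_(t < T) c t * (2 * a t - X t)
           = 2 * \sum_(t < T) c t * a t - \sum_(t < T) c t * X t.
  by rewrite mulr_sumr -sumrB; apply: eq_bigr => t _; ring.
by rewrite fa.2 fX; congr (_ - _); ring.
Qed.

Let gapE X t : X t != 0 -> gap X t = lam * c t * (X t - a t) ^+ 2 / X t.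
Proof. by move=> Xt; rewrite /gap Y_sq; field. Qed.

Let gap_ge0 X t : 0 <= X t -> (Y t != 0 -> X t != 0) -> 0 <= gap X t.
Proof.
move=> Xt0 YX; have [Xt|Xt] := eqVneq (X t) 0; last first.
  by rewrite gapE // divr_ge0 // mulr_ge0 ?sqr_ge0 // mulr_ge0 // ltW.
have : Y t = 0 by apply/eqP/negPn/negP => /YX; rewrite Xt eqxx.
rewrite Y_sq /gap Xt invr0 !mulr0 => /eqP; rewrite !mulf_eq0 (gt_eqF (c_gt0 t)) orbb /=.
by case/orP => /eqP ->; rewrite ?(mul0r, mulr0, subr0).
Qed.

Lemma alpha_sq_min X : feasible c M X -> (alpha a Y <= alpha X Y)%E.
Proof.
move=> fX; have [->|] := eqVneq (alpha X Y) +oo%E; first exact: leey.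
rewrite -ltey => Xfin; have YX := alpha_lt_pinfty_neq0 fX.1 Y_ge0 Xfin.
rewrite alpha_sq_profile (alpha_EFin YX) lee_fin -subr_ge0 -sum_gap //.
by apply: sumr_ge0 => t _; exact: gap_ge0 (fX.1 t) (YX t).
Qed.

Lemma alpha_sq_min_eq X : lam != 0 -> feasible c M X -> (alpha X Y <= alpha a Y)%E -> X = a.
Proof.
move=> lam0 fX Xmin; have lam_gt0 : 0 < lam by rewrite lt_def lam0.
have Xfin : (alpha X Y < +oo)%E by rewrite (le_lt_trans Xmin) // alpha_sq_profile ltey.
have YX := alpha_lt_pinfty_neq0 fX.1 Y_ge0 Xfin.
have gap0 : \sum_(t < T) gap X t = 0.
  apply/eqP; rewrite eq_le sumr_ge0 ?andbT => [|t _]; last exact: gap_ge0 (fX.1 t) (YX t).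
  by rewrite sum_gap // subr_le0 -lee_fin -alpha_sq_profile -alpha_EFin.
apply: funext => t; have [Xt|Xt] := eqVneq (X t) 0.
  have : Y t = 0 by apply/eqP/negPn/negP => /YX; rewrite Xt eqxx.
  rewrite Y_sq => /eqP; rewrite !mulf_eq0 (gt_eqF lam_gt0) (gt_eqF (c_gt0 t)) orbb /=.
  by rewrite Xt => /eqP ->.
have := psumr_eq0P (fun t _ => gap_ge0 (fX.1 t) (YX t)) gap0 (i := t) isT.
rewrite gapE // => /eqP; rewrite !mulf_eq0 invr_eq0 (negbTE Xt) (gt_eqF lam_gt0).
by rewrite (gt_eqF (c_gt0 t)) /= orbF orbb subr_eq0 => /eqP.
Qed.

End SquareProfile.

Section Maximizer.
Variables (R : realType) (T : nat).
Variables (sigma X Y : 'I_T -> R) (M : R).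
Hypotheses (sigma_gt0 : forall t, 0 < sigma t) (M_gt0 : 0 < M).
Hypotheses (X_ge0 : forall t, 0 <= X t) (fY : feasible sigma M Y).
Hypothesis Y_max : forall Y', feasible sigma M Y' -> (alpha X Y' <= alpha X Y)%E.

Definition concentrate (t : 'I_T) : 'I_T -> R :=
  fun u => if u == t then M / sigma t else 0.

Let concentrate_neq0 t u : (concentrate t u != 0) = (u == t).
Proof.
rewrite /concentrate; case: ifP => _; rewrite ?eqxx //.
by rewrite mulf_neq0 ?invr_eq0 ?gt_eqF.
Qed.

Let feasible_concentrate t : feasible sigma M (concentrate t).
Proof.
split=> [u|]; first by rewrite /concentrate; case: eqP => // _; rewrite divr_ge0 // ltW.
rewrite (bigD1 t) //= big1 => [|u /negbTE ut]; last by rewrite /concentrate ut mulr0.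
by rewrite /concentrate eqxx addr0 mulrC divfK // gt_eqF.
Qed.

Let concentrate_ge0 t u : 0 <= concentrate t u.
Proof. exact: (feasible_concentrate t).1. Qed.

Lemma maximizer_neq0 : (alpha X Y < +oo)%E -> forall t, X t != 0.
Proof.
move=> Yfin t; apply/eqP => Xt.
have := Y_max (feasible_concentrate t).
rewrite (alpha_pinfty X_ge0 (@concentrate_ge0 t) Xt) ?concentrate_neq0 //.
by rewrite leye_eq => /eqP Yinf; rewrite Yinf ltxx in Yfin.
Qed.

Let alpha_concentrate t : X t != 0 -> alpha X (concentrate t) = (M / sigma t / X t)%:E.
Proof.
move=> Xt; rewrite alpha_EFin => [|u]; last by rewrite concentrate_neq0 => /eqP ->.
rewrite (bigD1 t) //= big1 => [|u /negbTE ut]; last by rewrite /concentrate ut mul0r.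
by rewrite /concentrate eqxx addr0.
Qed.

(* [alpha X Y] is a [sigma * Y]-weighted average of the values
   [M / (sigma t * X t)] of the concentrated deviations, none of which exceeds it. *)
Lemma maximizer_const : (forall t, X t != 0) ->
  forall t, Y t != 0 -> sigma t * X t * \sum_(u < T) Y u / X u = M.
Proof.
move=> X0; set W := \sum_(u < T) Y u / X u.
have dev_le u : M / sigma u / X u <= W.
  have := Y_max (feasible_concentrate u).
  by rewrite alpha_concentrate // (alpha_EFin (fun v _ => X0 v)) lee_fin.
have term_ge0 u : 0 <= sigma u * Y u * (W - M / sigma u / X u).
  by rewrite !mulr_ge0 ?subr_ge0 ?fY.1 // ltW.
have terms0 : \sum_(u < T) sigma u * Y u * (W - M / sigma u / X u) = 0.
  rewrite (eq_bigr (fun u => W * (sigma u * Y u) - M * (Y u / X u))) => [|u _].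
    by rewrite sumrB -!mulr_sumr fY.2 -/W mulrC subrr.
  by field; rewrite X0 gt_eqF.
move=> t Yt; have := psumr_eq0P (fun u _ => term_ge0 u) terms0 (i := t) isT.
move/eqP; rewrite !mulf_eq0 (negbTE Yt) gt_eqF //= subr_eq0 => /eqP ->.
by field; rewrite X0 gt_eqF.
Qed.

End Maximizer.

Section Game.
Variables (R : realType) (T : nat) (kappa sigma : 'I_T -> R) (MX MY : R).
Hypotheses (MX_gt0 : 0 < MX) (MY_gt0 : 0 < MY).
Hypotheses (kappa_gt0 : forall t, 0 < kappa t) (sigma_gt0 : forall t, 0 < sigma t).

Lemma equilibrium_of_shape X Y (lam K : R) :
  feasible kappa MX X -> feasible sigma MY Y -> 0 <= lam -> K != 0 ->
  (forall t, Y t = lam * (kappa t * X t ^+ 2)) -> (forall t, sigma t * X t = K) ->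
  is_equilibrium kappa sigma MX MY X Y.
Proof.
move=> fX fY lam_ge0 K0 Y_sq sX; apply/equilibriumE; split=> // [X' fX'|Y' fY'].
  exact: alpha_sq_min kappa_gt0 fX lam_ge0 Y_sq _ fX'.
by rewrite (alpha_sigma_const K0 sX fY'.2) (alpha_sigma_const K0 sX fY.2).
Qed.

Lemma equilibrium_shape X Y : is_equilibrium kappa sigma MX MY X Y ->
  exists lam K, [/\ 0 < lam, forall t, Y t = lam * (kappa t * X t ^+ 2)
                  & forall t, sigma t * X t = K].
Proof.
move=> /equilibriumE[fX fY Xmin Ymax].
have [a [lam [fa lam_gt0 Y_sq]]] :=
  sq_profile_exists kappa_gt0 MX_gt0 fY.1 (feasible_neq0 MY_gt0 fY).
have Xa : X = a :=
  alpha_sq_min_eq kappa_gt0 fa (ltW lam_gt0) Y_sq (lt0r_neq0 lam_gt0) fX (Xmin a fa).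
subst a; exists lam, (MY / \sum_(u < T) Y u / X u); split=> // t.
have Yfin : (alpha X Y < +oo)%E by rewrite (alpha_sq_profile fX Y_sq) ltey.
have X0 := maximizer_neq0 sigma_gt0 MY_gt0 fX.1 Ymax Yfin.
have Yt : Y t != 0 by rewrite Y_sq !mulf_neq0 ?expf_neq0 ?X0 ?lt0r_neq0.
have sXW := maximizer_const sigma_gt0 MY_gt0 fY Ymax X0 Yt.
rewrite -{1}sXW mulfK //; apply: contra_neq (lt0r_neq0 MY_gt0) => W0.
by rewrite -sXW W0 mulr0.
Qed.

Hypothesis T_gt0 : (0 < T)%N.

Let r := \sum_(t < T) kappa t / sigma t.
Let Xs t := MX / kappa t * ((kappa t / sigma t) / r).
Let Ys t := MY / sigma t * ((kappa t / sigma t) / r).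

Let r_gt0 : 0 < r.
Proof.
rewrite /r (bigD1 (Ordinal T_gt0)) //= ltr_pwDl ?divr_gt0 // sumr_ge0 // => t _.
by rewrite divr_ge0 // ltW.
Qed.

Let kappa_neq0 t : kappa t != 0. Proof. exact: lt0r_neq0. Qed.
Let sigma_neq0 t : sigma t != 0. Proof. exact: lt0r_neq0. Qed.
Let r_neq0 : r != 0. Proof. exact: lt0r_neq0. Qed.
Let MX_neq0 : MX != 0. Proof. exact: lt0r_neq0. Qed.

Let sum_r (c Z : 'I_T -> R) M : (forall t, c t * Z t = M / r * (kappa t / sigma t)) ->
  \sum_(t < T) c t * Z t = M.
Proof. by move=> cZ; rewrite (eq_bigr _ (fun t _ => cZ t)) -mulr_sumr divfK. Qed.

Let feasible_Xs : feasible kappa MX Xs.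
Proof.
split=> [t|]; first by rewrite /Xs !(mulr_ge0, divr_ge0, invr_ge0) // ltW.
by apply: sum_r => t; rewrite /Xs; field; rewrite kappa_neq0 sigma_neq0 r_neq0.
Qed.

Let feasible_Ys : feasible sigma MY Ys.
Proof.
split=> [t|]; first by rewrite /Ys !(mulr_ge0, divr_ge0, invr_ge0) // ltW.
by apply: sum_r => t; rewrite /Ys; field; rewrite sigma_neq0 r_neq0.
Qed.

Let sigma_Xs t : sigma t * Xs t = MX / r.
Proof. by rewrite /Xs; field; rewrite kappa_neq0 sigma_neq0 r_neq0. Qed.

Let MX_r_neq0 : MX / r != 0.
Proof. by rewrite mulf_neq0 ?invr_eq0. Qed.

Lemma piWL_Xs_Ys : piWL Xs Ys = Lfun ((MY / MX * r)%:E).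
Proof.
rewrite /piWL (alpha_sigma_const MX_r_neq0 sigma_Xs feasible_Ys.2).
by congr (Lfun _%:E); field; rewrite MX_neq0 r_neq0.
Qed.

Lemma equilibrium_Xs_Ys : is_equilibrium kappa sigma MX MY Xs Ys.
Proof.
apply: (equilibrium_of_shape (lam := MY * r / MX ^+ 2)) feasible_Xs feasible_Ys _
  MX_r_neq0 _ sigma_Xs => [|t].
  by rewrite ltW // divr_gt0 ?mulr_gt0 ?exprn_gt0.
by rewrite /Ys /Xs; field; rewrite kappa_neq0 sigma_neq0 r_neq0.
Qed.

Lemma equilibrium_unique X Y : is_equilibrium kappa sigma MX MY X Y -> X = Xs /\ Y = Ys.
Proof.
move=> eqXY; have [[_ fX] [_ fY] _ _] := eqXY.
have [lam [K [_ Y_sq sX]]] := equilibrium_shape eqXY.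
have XE : X = Xs.
  have Xg t : X t = K * (sigma t)^-1 by rewrite -(sX t); field.
  rewrite (sum_proportional Xg fX r_neq0); apply: funext => t.
  by rewrite -/r /Xs; field; rewrite kappa_neq0 sigma_neq0 r_neq0.
split=> //; subst X.
have Yg t : Y t = lam * MX ^+ 2 / r ^+ 2 * (kappa t / sigma t ^+ 2).
  by rewrite Y_sq /Xs; field; rewrite kappa_neq0 sigma_neq0 r_neq0.
have sum_ks : \sum_(t < T) sigma t * (kappa t / sigma t ^+ 2) = r.
  by apply: eq_bigr => t _; field.
rewrite (sum_proportional Yg fY) sum_ks //; apply: funext => t.
by rewrite /Ys; field; rewrite sigma_neq0 r_neq0.
Qed.

End Game.

Theorem lemma1 (R : realType) (T : nat) (hT : (0 < T)%N)
  (MX MY : R) (kappa sigma : 'I_T -> R)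
  (hMX : 0 < MX) (hMY : 0 < MY)
  (hk : forall t, 0 < kappa t) (hs : forall t, 0 < sigma t) :
  let r := \sum_(t < T) kappa t / sigma t in
  let Xs := fun t : 'I_T => MX / kappa t * ((kappa t / sigma t) / r) in
  let Ys := fun t : 'I_T => MY / sigma t * ((kappa t / sigma t) / r) in
  [/\ is_equilibrium kappa sigma MX MY Xs Ys,
      (forall X Y, is_equilibrium kappa sigma MX MY X Y -> X = Xs /\ Y = Ys),
      piWL Xs Ys = Lfun ((MY / MX * r)%:E)
    & 1 - piWL Xs Ys = 1 - Lfun ((MY / MX * r)%:E)].
Proof.
have piE := piWL_Xs_Ys hMX hMY hk hs hT.
split; last by rewrite piE.
- exact: equilibrium_Xs_Ys hMX hMY hk hs hT.
- exact: equilibrium_unique hMX hMY hk hs hT.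
- exact: piE.
Qed.
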